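(* Let $\Omega\subset\mathbb{C}^d$ be a complete Kobayashi hyperbolic domain. Then for every $o\in\Omega$, $x\in\partial\Omega$ and $R>0$, the set $H^b_o(x,R)$ is nonempty. Moreover, if $\Omega$ is bounded, then $\overline{H^b_o(x,R)}\cap\partial\Omega$ is nonempty.
   Context: For a Kobayashi hyperbolic domain $\Omega\subset\mathbb{C}^d$ with Kobayashi distance $\mathsf{k}_\Omega$, $x\in\partial\Omega$, $o\in\Omega$, $R>0$: $H^b_o(x,R)=\{z\in\Omega:\liminf_{w\to x}(\mathsf{k}_\Omega(z,w)-\mathsf{k}_\Omega(o,w))<\tfrac12\log R\}$; closure in $\mathbb{C}^d$. Complete Kobayashi hyperbolic means $(\Omega,\mathsf{k}_\Omega)$ is Cauchy complete. *)

From Stdlib Require Import Reals.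
From Stdlib Require Fin.
From Coquelicot Require Import Coquelicot.
Open Scope R_scope.

Definition Cd (d : nat) := Fin.t d -> C.

(* max-norm neighbourhood (defines the usual Euclidean topology of C^d) *)
Definition near_pt {d : nat} (x w : Cd d) (eps : R) : Prop :=
  forall i : Fin.t d, Cmod (w i - x i)%C < eps.

Definition is_open {d : nat} (U : Cd d -> Prop) : Prop :=
  forall z, U z -> exists eps, 0 < eps /\ forall w, near_pt z w eps -> U w.

Definition is_connected {d : nat} (Om : Cd d -> Prop) : Prop :=
  forall U V : Cd d -> Prop, is_open U -> is_open V ->
    (forall z, Om z -> U z \/ V z) ->
    (exists z, Om z /\ U z) -> (exists z, Om z /\ V z) ->
    exists z, Om z /\ U z /\ V z.

Definition is_domain {d : nat} (Om : Cd d -> Prop) : Prop :=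
  is_open Om /\ is_connected Om /\ exists z, Om z.

Definition closure {d : nat} (A : Cd d -> Prop) : Cd d -> Prop :=
  fun x => forall eps, 0 < eps -> exists a, A a /\ near_pt x a eps.

Definition boundary {d : nat} (A : Cd d -> Prop) : Cd d -> Prop :=
  fun x => closure A x /\ ~ A x.

Definition is_bounded {d : nat} (A : Cd d -> Prop) : Prop :=
  exists M, forall z, A z -> forall i, Cmod (z i) <= M.

Definition hol_disc {d : nat} (Om : Cd d -> Prop) (f : C -> Cd d) : Prop :=
  forall z : C, Cmod z < 1 ->
    Om (f z) /\ forall i : Fin.t d, ex_derive (fun u : C => f u i) z.

(* Poincare distance from 0 in the unit disc (curvature -4 convention) *)
Definition poinc0 (zeta : C) : R :=
  / 2 * ln ((1 + Cmod zeta) / (1 - Cmod zeta)).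

Fixpoint rsum (n : nat) (a : nat -> R) : R :=
  match n with O => 0 | S m => rsum m a + a m end.

Definition kob_chain_len {d : nat} (Om : Cd d -> Prop) (z w : Cd d) (l : R)
  : Prop :=
  exists (n : nat) (p : nat -> Cd d) (f : nat -> C -> Cd d) (zeta : nat -> C),
    p O = z /\ p n = w /\
    (forall j, (j < n)%nat ->
       hol_disc Om (f j) /\ Cmod (zeta j) < 1 /\
       f j 0%C = p j /\ f j (zeta j) = p (S j)) /\
    l = rsum n (fun j => poinc0 (zeta j)).

Definition kob_dist {d : nat} (Om : Cd d -> Prop) (z w : Cd d) : R :=
  real (Glb_Rbar (kob_chain_len Om z w)).

Definition kob_hyperbolic {d : nat} (Om : Cd d -> Prop) : Prop :=
  forall z w, Om z -> Om w -> z <> w -> 0 < kob_dist Om z w.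

Definition kob_complete {d : nat} (Om : Cd d -> Prop) : Prop :=
  forall u : nat -> Cd d, (forall n, Om (u n)) ->
    (forall eps, 0 < eps -> exists N, forall m n, (N <= m)%nat -> (N <= n)%nat ->
        kob_dist Om (u m) (u n) < eps) ->
    exists l, Om l /\ forall eps, 0 < eps -> exists N, forall n, (N <= n)%nat ->
        kob_dist Om (u n) l < eps.

Definition complete_kob_hyperbolic {d : nat} (Om : Cd d -> Prop) : Prop :=
  is_domain Om /\ kob_hyperbolic Om /\ kob_complete Om.

Definition liminf_at {d : nat} (Om : Cd d -> Prop) (x : Cd d) (g : Cd d -> R)
  : Rbar :=
  Lub_Rbar (fun r => exists eps, 0 < eps /\ (forall w, Om w -> near_pt x w eps -> r <= g w)).

Definition horoball {d : nat} (Om : Cd d -> Prop) (o x : Cd d) (Rr : R)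
  : Cd d -> Prop :=
  fun z => Om z /\
    Rbar_lt (liminf_at Om x (fun w => kob_dist Om z w - kob_dist Om o w))
            (Finite (/ 2 * ln Rr)).

From Stdlib Require Import Reals Lra Lia FunctionalExtensionality Classical ClassicalEpsilon.
From Stdlib Require Fin.
From Coquelicot Require Import Coquelicot.
Open Scope R_scope.

(* Say that [z] has depth [s] if [liminf_(w -> x) (k(z, w) - k(o, w)) <= - s]; points of depth
   larger than [- log R / 2] lie in the horoball, and [o] has depth [0].  Near a point [z] of
   depth [s], split almost minimal chains from [z] to points [w] close to [x] after a length [t]:
   by hyperbolicity these chains must first leave a Euclidean ball around [z], which costs a
   length bounded below, so for small [t] the splitting points stay in that ball and accumulate
   at a point [z'] with [k(z, z') <= t] and depth [s + t/2].  Hence depths are unbounded: a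
   greedy sequence of such steps is Cauchy for [k], and by completeness it converges to a point
   from which one can still step further.  A point of depth [n] is at distance at least [n - 1]
   from [o]; in a bounded domain such points accumulate at some [y], and [y] cannot be interior
   because points Euclidean-close to an interior point are Kobayashi-close to it. *)

Definition poinc (s : R) : R := / 2 * ln ((1 + s) / (1 - s)).

Lemma poinc0_poinc (zeta : C) : poinc0 zeta = poinc (Cmod zeta).
Proof. reflexivity. Qed.

Lemma poinc_0 : poinc 0 = 0.
Proof. unfold poinc. replace ((1 + 0) / (1 - 0)) with 1 by field. rewrite ln_1. ring. Qed.

Lemma poinc_lt (s t : R) : 0 <= s < t -> t < 1 -> poinc s < poinc t.
Proof.
  intros Hs Ht. unfold poinc. apply Rmult_lt_compat_l; [lra|].
  apply ln_increasing; [apply Rdiv_lt_0_compat; lra|].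
  apply Rmult_lt_reg_r with ((1 - s) * (1 - t)); [apply Rmult_lt_0_compat; lra|].
  replace ((1 + s) / (1 - s) * ((1 - s) * (1 - t))) with ((1 + s) * (1 - t)) by (field; lra).
  replace ((1 + t) / (1 - t) * ((1 - s) * (1 - t))) with ((1 + t) * (1 - s)) by (field; lra).
  nra.
Qed.

Lemma poinc_le (s t : R) : 0 <= s <= t -> t < 1 -> poinc s <= poinc t.
Proof.
  intros Hs Ht. destruct (Req_dec s t) as [->|Hne]; [lra|].
  left. apply poinc_lt; lra.
Qed.

Lemma poinc_ge0 (s : R) : 0 <= s < 1 -> 0 <= poinc s.
Proof. intros Hs. rewrite <- poinc_0. apply poinc_le; lra. Qed.

Lemma poinc0_ge0 (zeta : C) : Cmod zeta < 1 -> 0 <= poinc0 zeta.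
Proof. intros H. apply poinc_ge0. pose proof (Cmod_ge_0 zeta). lra. Qed.

Lemma poinc_le_double (t : R) : 0 <= t <= 1 / 2 -> poinc t <= 2 * t.
Proof.
  intros Ht. unfold poinc.
  assert (Hp : 0 < (1 + t) / (1 - t)) by (apply Rdiv_lt_0_compat; lra).
  pose proof (exp_ineq1_le (ln ((1 + t) / (1 - t)))) as H. rewrite exp_ln in H by auto.
  assert ((1 + t) / (1 - t) - 1 <= 4 * t).
  { apply Rmult_le_reg_r with (1 - t); [lra|].
    unfold Rdiv. rewrite Rmult_minus_distr_r, Rmult_assoc, Rinv_l by lra. nra. }
  lra.
Qed.

Lemma poinc_tanh (t : R) : poinc ((exp (2 * t) - 1) / (exp (2 * t) + 1)) = t.
Proof.
  pose proof (exp_pos (2 * t)). unfold poinc.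
  replace ((1 + (exp (2 * t) - 1) / (exp (2 * t) + 1)) / (1 - (exp (2 * t) - 1) / (exp (2 * t) + 1)))
    with (exp (2 * t)) by (field; lra).
  rewrite ln_exp. field.
Qed.

(* Moving from [0] to [rho] and then rescaling the disc [D(rho, 1 - rho)] to the unit disc
   gains at least half of the first step. *)
Lemma poinc_split (rho r : R) : 0 <= rho <= r -> r < 1 ->
  poinc ((r - rho) / (1 - rho)) + poinc rho / 2 <= poinc r.
Proof.
  intros Hrho Hr. unfold poinc.
  set (A := (1 + (r - rho) / (1 - rho)) / (1 - (r - rho) / (1 - rho))).
  set (B := (1 + rho) / (1 - rho)). set (Cc := (1 + r) / (1 - r)).
  assert (HA : A = (1 + r - 2 * rho) / (1 - r)) by (unfold A; field; split; lra).
  assert (HAp : 0 < A) by (rewrite HA; apply Rdiv_lt_0_compat; lra).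
  assert (HBp : 0 < B) by (apply Rdiv_lt_0_compat; lra).
  assert (HCp : 0 < Cc) by (apply Rdiv_lt_0_compat; lra).
  assert (Hineq : A * A * B <= Cc * Cc).
  { rewrite HA. unfold B, Cc.
    replace ((1 + r - 2 * rho) / (1 - r) * ((1 + r - 2 * rho) / (1 - r)) * ((1 + rho) / (1 - rho)))
      with ((1 + r - 2 * rho) * (1 + r - 2 * rho) * (1 + rho) / ((1 - r) * (1 - r) * (1 - rho)))
      by (field; lra).
    replace ((1 + r) / (1 - r) * ((1 + r) / (1 - r)))
      with ((1 + r) * (1 + r) * (1 - rho) / ((1 - r) * (1 - r) * (1 - rho))) by (field; lra).
    unfold Rdiv. apply Rmult_le_compat_r.
    { apply Rlt_le, Rinv_0_lt_compat. apply Rmult_lt_0_compat; [nra|lra]. }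
    assert (0 <= (1 + r) * (1 - r)) by (apply Rmult_le_pos; lra).
    assert (0 <= 2 * rho * (r - rho)) by (apply Rmult_le_pos; lra).
    assert (0 <= 2 * rho * ((1 + r) * (1 - r) + 2 * rho * (r - rho))) by (apply Rmult_le_pos; lra).
    lra. }
  apply ln_le in Hineq; [|apply Rmult_lt_0_compat; auto; apply Rmult_lt_0_compat; auto].
  rewrite !ln_mult in Hineq by (auto; apply Rmult_lt_0_compat; auto). lra.
Qed.

Lemma rsum_S_l (n : nat) (a : nat -> R) :
  rsum (S n) a = a O + rsum n (fun j => a (S j)).
Proof. induction n as [|n IH]; simpl in *; [lra|]. rewrite IH. lra. Qed.

(* Complex derivatives are taken w.r.t. [C] as a normed module over itself; [hol_disc] uses
   the canonical normed-module structure of [C] instead, which has the same topology. *)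
Definition cderivable (f : C -> C) (x : C) :=
  @ex_derive C_AbsRing (AbsRing_NormedModule C_AbsRing) f x.

Lemma cderivable_ex_derive (f : C -> C) (x : C) : cderivable f x -> ex_derive f x.
Proof.
  intros [l [[H1 H2 [M HM]] Hdom]]. exists l. split.
  - split; auto. exists M. exact HM.
  - intros y Hy eps. exact (Hdom y Hy eps).
Qed.

Lemma ex_derive_cderivable (f : C -> C) (x : C) : ex_derive f x -> cderivable f x.
Proof.
  intros [l [[H1 H2 [M HM]] Hdom]]. exists l. split.
  - split; auto. exists M. exact HM.
  - intros y Hy eps. exact (Hdom y Hy eps).
Qed.

Lemma is_derive_Cinv (a : C) : a <> 0%C ->
  @is_derive C_AbsRing (AbsRing_NormedModule C_AbsRing) (fun y : C => / y)%C a (- / (a * a))%C.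
Proof.
  intros Ha. split; [apply is_linear_scal_l|].
  intros x Hx.
  pose proof (@is_filter_lim_locally_unique C_AbsRing (AbsRing_NormedModule C_AbsRing) a x Hx).
  subst x. intros eps. apply (@locally_le_locally_norm C_AbsRing (AbsRing_NormedModule C_AbsRing)).
  pose proof (cond_pos eps) as Heps.
  assert (Hpa : 0 < Cmod a) by (apply Cmod_gt_0; auto).
  set (del := Rmin (Cmod a / 2) (eps * (Cmod a * Cmod a * Cmod a) / 2)).
  assert (Hdel : 0 < del).
  { apply Rmin_pos; [lra|]. apply Rmult_lt_0_compat; [|lra].
    repeat apply Rmult_lt_0_compat; auto. }
  exists (mkposreal del Hdel). intros y Hy. unfold ball_norm in Hy. simpl in Hy. change C in y.
  change (norm ?u) with (Cmod u) in *. change (minus y a) with (y - a)%C in *.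
  assert (Hya : Cmod (y - a) < Cmod a / 2) by (eapply Rlt_le_trans; [apply Hy | apply Rmin_l]).
  assert (Hya2 : Cmod (y - a) < eps * (Cmod a * Cmod a * Cmod a) / 2)
    by (eapply Rlt_le_trans; [apply Hy | apply Rmin_r]).
  assert (Hy0 : Cmod a / 2 <= Cmod y).
  { assert (Cmod a <= Cmod y + Cmod (a - y)).
    { replace a with (y + (a - y))%C at 1 by ring. apply Cmod_triangle. }
    replace (a - y)%C with (- (y - a))%C in H by ring. rewrite Cmod_opp in H. lra. }
  assert (Hyn : y <> 0%C) by (intros E; subst; rewrite Cmod_0 in Hy0; lra).
  change (minus (minus (/ y) (/ a)) (scal (y - a) (- / (a * a))))%C
    with ((/ y - / a) - (y - a) * (- / (a * a)))%C.
  replace ((/ y - / a) - (y - a) * (- / (a * a)))%C with ((y - a) * (y - a) / (y * (a * a)))%C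
    by (field; split; auto).
  rewrite Cmod_div by (repeat apply Cmult_neq_0; auto).
  rewrite !Cmod_mult. pose proof (Cmod_ge_0 (y - a)).
  assert (Hpos : 0 < Cmod y * (Cmod a * Cmod a)) by (apply Rmult_lt_0_compat; nra).
  apply Rmult_le_reg_r with (Cmod y * (Cmod a * Cmod a)); [exact Hpos|].
  unfold Rdiv. rewrite Rmult_assoc, Rinv_l, Rmult_1_r by lra.
  assert (Cmod (y - a) <= eps * (Cmod y * (Cmod a * Cmod a))).
  { assert (eps * (Cmod a * Cmod a * Cmod a) / 2 <= eps * (Cmod y * (Cmod a * Cmod a))).
    { replace (eps * (Cmod a * Cmod a * Cmod a) / 2)
        with (eps * ((Cmod a / 2) * (Cmod a * Cmod a))) by field.
      apply Rmult_le_compat_l; [lra|]. apply Rmult_le_compat_r; nra. }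
    lra. }
  replace (eps * Cmod (y - a) * (Cmod y * (Cmod a * Cmod a)))
    with (Cmod (y - a) * (eps * (Cmod y * (Cmod a * Cmod a)))) by ring.
  apply Rmult_le_compat_l; auto.
Qed.

Lemma cderivable_plus (f g : C -> C) x :
  cderivable f x -> cderivable g x -> cderivable (fun y => f y + g y)%C x.
Proof.
  intros [l1 H1] [l2 H2]. exists (plus l1 l2).
  exact (@is_derive_plus C_AbsRing (AbsRing_NormedModule C_AbsRing) f g x l1 l2 H1 H2).
Qed.

Lemma cderivable_minus (f g : C -> C) x :
  cderivable f x -> cderivable g x -> cderivable (fun y => f y - g y)%C x.
Proof.
  intros [l1 H1] [l2 H2]. exists (minus l1 l2).
  exact (@is_derive_minus C_AbsRing (AbsRing_NormedModule C_AbsRing) f g x l1 l2 H1 H2).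
Qed.

Lemma cderivable_mult (f g : C -> C) x :
  cderivable f x -> cderivable g x -> cderivable (fun y => f y * g y)%C x.
Proof.
  intros [l1 H1] [l2 H2]. eexists. apply (is_derive_mult f g x l1 l2 H1 H2).
  intros. change (n * m = m * n)%C. ring.
Qed.

Lemma cderivable_const (a : C) x : cderivable (fun _ => a) x.
Proof. exists zero. apply (@is_derive_const C_AbsRing (AbsRing_NormedModule C_AbsRing)). Qed.

Lemma cderivable_id x : cderivable (fun y => y) x.
Proof. exists one. apply (@is_derive_id C_AbsRing). Qed.

Lemma cderivable_inv (f : C -> C) x :
  cderivable f x -> f x <> 0%C -> cderivable (fun y => / f y)%C x.
Proof.
  intros Hf Hn.
  apply (@ex_derive_comp C_AbsRing (AbsRing_NormedModule C_AbsRing) (fun y : C => / y)%C f x); auto.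
  eexists. apply is_derive_Cinv; auto.
Qed.

Lemma cderivable_continuous (g : C -> C) x : cderivable g x ->
  forall eps, 0 < eps -> exists del, 0 < del /\
    forall y, Cmod (y - x) < del -> Cmod (g y - g x) < eps.
Proof.
  intros H eps He.
  pose proof (@ex_derive_continuous C_AbsRing (AbsRing_NormedModule C_AbsRing) g x H) as Hc.
  destruct (Hc (fun y => @ball (AbsRing_NormedModule C_AbsRing) (g x) eps y)) as [del Hd].
  { exists (mkposreal eps He). auto. }
  exists del. split; [apply cond_pos|]. intros y Hy. apply (Hd y). exact Hy.
Qed.

Lemma hol_disc_comp {d} (Om : Cd d -> Prop) (f : C -> Cd d) (phi : C -> C) :
  hol_disc Om f -> (forall v, Cmod v < 1 -> Cmod (phi v) < 1 /\ cderivable phi v) ->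
  hol_disc Om (fun v => f (phi v)).
Proof.
  intros Hf Hp z Hz. destruct (Hp z Hz) as [H1 H2]. destruct (Hf _ H1) as [H3 H4].
  split; auto. intros i. apply (ex_derive_comp (fun u => f u i) phi z); auto.
Qed.

Lemma Cmod_lt_sq (u v : C) : fst u ^ 2 + snd u ^ 2 < fst v ^ 2 + snd v ^ 2 -> Cmod u < Cmod v.
Proof. intros H. unfold Cmod. apply sqrt_lt_1; auto; nra. Qed.

Lemma Cmod_lt1_sq (u : C) : Cmod u < 1 -> fst u ^ 2 + snd u ^ 2 < 1.
Proof.
  unfold Cmod. intros H. rewrite <- sqrt_1 in H. apply sqrt_lt_0_alt in H. exact H.
Qed.

Definition mobius (zeta v : C) : C := ((zeta - v) / (1 - Cconj zeta * v))%C.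

Lemma mobius_den_neq0 (zeta v : C) : Cmod zeta < 1 -> Cmod v < 1 -> (1 - Cconj zeta * v)%C <> 0%C.
Proof.
  intros H1 H2 E. apply Cmod_lt1_sq in H1. apply Cmod_lt1_sq in H2.
  destruct zeta as [a b], v as [x y]. simpl in *. injection E. nra.
Qed.

Lemma mobius_disc (zeta v : C) : Cmod zeta < 1 -> Cmod v < 1 -> Cmod (mobius zeta v) < 1.
Proof.
  intros H1 H2. unfold mobius. pose proof (mobius_den_neq0 _ _ H1 H2) as Hn.
  rewrite Cmod_div; auto. assert (0 < Cmod (1 - Cconj zeta * v)) by (apply Cmod_gt_0; auto).
  apply (proj1 (Rdiv_lt_1 _ _ H)). apply Cmod_lt_sq. apply Cmod_lt1_sq in H1. apply Cmod_lt1_sq in H2.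
  destruct zeta as [a b], v as [x y]. simpl in *. nra.
Qed.

Lemma mobius_cderivable (zeta v : C) : Cmod zeta < 1 -> Cmod v < 1 -> cderivable (mobius zeta) v.
Proof.
  intros H1 H2. unfold mobius, Cdiv.
  apply cderivable_mult; [apply cderivable_minus; [apply cderivable_const | apply cderivable_id]|].
  apply cderivable_inv; [|apply mobius_den_neq0; auto].
  apply cderivable_minus; [apply cderivable_const|].
  apply cderivable_mult; [apply cderivable_const | apply cderivable_id].
Qed.

Lemma mobius_0 (zeta : C) : mobius zeta 0%C = zeta.
Proof.
  destruct zeta as [a b]. unfold mobius, Cdiv, Cinv, Cconj, Cmult, Cminus, Cplus, Copp. simpl.
  f_equal; field.
Qed.

Lemma mobius_self (zeta : C) : mobius zeta zeta = 0%C.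
Proof.
  destruct zeta as [a b]. unfold mobius, Cdiv, Cinv, Cconj, Cmult, Cminus, Cplus, Copp, RtoC.
  simpl. f_equal; ring.
Qed.

Lemma Glb_Rbar_nonneg (E : R -> Prop) : (exists l, E l) -> (forall l, E l -> 0 <= l) ->
  0 <= real (Glb_Rbar E) /\ (forall l, E l -> real (Glb_Rbar E) <= l) /\
  (forall eps, 0 < eps -> exists l, E l /\ l < real (Glb_Rbar E) + eps).
Proof.
  intros [l0 Hl0] Hpos. destruct (Glb_Rbar_correct E) as [Hlb Hgr].
  assert (Hle : Rbar_le (Glb_Rbar E) l0) by (apply Hlb; auto).
  assert (Hge : Rbar_le 0 (Glb_Rbar E)) by (apply Hgr; intros x Hx; apply Hpos; auto).
  destruct (Glb_Rbar E) as [g| |]; simpl in *; try contradiction.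
  split; [auto|]. split.
  - intros l Hl. exact (Hlb l Hl).
  - intros eps He. apply NNPP. intros Hn.
    assert (Rbar_le (g + eps) g); [|simpl in *; lra].
    apply Hgr. intros x Hx. simpl. apply Rnot_lt_le. intros Hlt. apply Hn. eauto.
Qed.

Section Chains.
Context {d : nat} (Om : Cd d -> Prop).

Inductive kchain : Cd d -> Cd d -> R -> Prop :=
| kchain_nil z : kchain z z 0
| kchain_cons f zeta w l : hol_disc Om f -> Cmod zeta < 1 ->
    kchain (f zeta) w l -> kchain (f 0%C) w (poinc0 zeta + l).

Lemma kob_chain_lenE z w l : kob_chain_len Om z w l <-> kchain z w l.
Proof.
  split.
  - intros (n & p & f & zeta & <- & <- & Hj & ->).
    revert p f zeta Hj. induction n as [|n IH]; intros p f zeta Hj; [constructor|].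
    rewrite rsum_S_l. destruct (Hj O ltac:(lia)) as (Hd & Hz & <- & E1).
    apply kchain_cons; auto. rewrite E1.
    apply (IH (fun j => p (S j)) (fun j => f (S j)) (fun j => zeta (S j))).
    intros j Hj'. apply Hj. lia.
  - induction 1 as [z|f zeta w l Hf Hz _ (n & p & g & ze & E0 & Hn & Hj & Hl)].
    + exists O, (fun _ => z), (fun _ _ => z), (fun _ => 0%C). repeat split; auto; intros; lia.
    + exists (S n), (fun j => match j with O => f 0%C | S j' => p j' end),
        (fun j => match j with O => f | S j' => g j' end),
        (fun j => match j with O => zeta | S j' => ze j' end).
      split; [reflexivity|]. split; [exact Hn|]. split.
      * intros [|k] Hk; [split; [|split; [|split]]; auto | apply Hj; lia].
      * rewrite rsum_S_l, Hl. reflexivity.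
Qed.

Lemma kob_distE z w : kob_dist Om z w = real (Glb_Rbar (kchain z w)).
Proof. unfold kob_dist. f_equal. apply Glb_Rbar_eqset. apply kob_chain_lenE. Qed.

Lemma kchain_ge0 z w l : kchain z w l -> 0 <= l.
Proof. induction 1 as [|f zeta w l _ Hz _ IH]; [lra|]. pose proof (poinc0_ge0 zeta Hz). lra. Qed.

Lemma kchain_cat a b c l1 l2 : kchain a b l1 -> kchain b c l2 -> kchain a c (l1 + l2).
Proof.
  induction 1; intros H2; [rewrite Rplus_0_l; auto|].
  rewrite Rplus_assoc. constructor; auto.
Qed.

Lemma kchain_disc f zeta : hol_disc Om f -> Cmod zeta < 1 ->
  kchain (f 0%C) (f zeta) (poinc0 zeta).
Proof. intros. rewrite <- (Rplus_0_r (poinc0 zeta)). apply kchain_cons; auto. constructor. Qed.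

(* A disc is reversed by precomposing with the disc automorphism swapping [0] and [zeta]. *)
Lemma kchain_rev z w l : kchain z w l -> kchain w z l.
Proof.
  induction 1 as [|f zeta w l Hf Hz _ IH]; [constructor|].
  assert (Hg : hol_disc Om (fun v => f (mobius zeta v))).
  { apply hol_disc_comp; auto. intros v Hv.
    split; [apply mobius_disc | apply mobius_cderivable]; auto. }
  pose proof (kchain_disc _ zeta Hg Hz) as Hd. simpl in Hd. rewrite mobius_0, mobius_self in Hd.
  rewrite Rplus_comm. eapply kchain_cat; eauto.
Qed.

Definition joined z w := exists l, kchain z w l.

Lemma joined_trans a b c : joined a b -> joined b c -> joined a c.
Proof. intros [l1 H1] [l2 H2]. exists (l1 + l2). eapply kchain_cat; eauto. Qed.

Lemma kob_dist_le z w l : kchain z w l -> kob_dist Om z w <= l.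
Proof.
  intros H. rewrite kob_distE.
  destruct (Glb_Rbar_nonneg (kchain z w)) as (_ & Hlb & _); eauto using kchain_ge0.
Qed.

Lemma kob_dist_ge0 z w : 0 <= kob_dist Om z w.
Proof.
  rewrite kob_distE. destruct (classic (joined z w)) as [Hc|Hc].
  - destruct (Glb_Rbar_nonneg (kchain z w)) as (H & _); auto. apply kchain_ge0.
  - replace (Glb_Rbar (kchain z w)) with p_infty; [simpl; lra|].
    destruct (Glb_Rbar_correct (kchain z w)) as [_ Hgr].
    assert (Rbar_le p_infty (Glb_Rbar (kchain z w))).
    { apply Hgr. intros x Hx. exfalso. apply Hc. exists x. auto. }
    destruct (Glb_Rbar (kchain z w)); simpl in *; auto; contradiction.
Qed.

Lemma kob_dist_approx z w : joined z w ->
  forall eps, 0 < eps -> exists l, kchain z w l /\ l < kob_dist Om z w + eps.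
Proof.
  intros Hc. rewrite kob_distE.
  destruct (Glb_Rbar_nonneg (kchain z w)) as (_ & _ & H); auto. apply kchain_ge0.
Qed.

Lemma kob_dist_refl z : kob_dist Om z z = 0.
Proof. apply Rle_antisym; [apply (kob_dist_le z z 0); constructor | apply kob_dist_ge0]. Qed.

Lemma kob_dist_triangle a b c : joined a b -> joined b c ->
  kob_dist Om a c <= kob_dist Om a b + kob_dist Om b c.
Proof.
  intros H1 H2. apply Rle_plus_epsilon. intros eps He.
  destruct (kob_dist_approx a b H1 (eps / 2)) as (l1 & C1 & L1); [lra|].
  destruct (kob_dist_approx b c H2 (eps / 2)) as (l2 & C2 & L2); [lra|].
  pose proof (kob_dist_le a c _ (kchain_cat _ _ _ _ _ C1 C2)). lra.
Qed.

Lemma kob_dist_sym z w : kob_dist Om z w = kob_dist Om w z.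
Proof.
  rewrite !kob_distE. f_equal. apply Glb_Rbar_eqset. intros; split; apply kchain_rev.
Qed.

End Chains.

Section Near.
Context {d : nat}.

Lemma near_pt_refl (a : Cd d) e : 0 < e -> near_pt a a e.
Proof. intros H i. replace (a i - a i)%C with (RtoC 0) by ring. rewrite Cmod_0. auto. Qed.

Lemma near_pt_le (a b : Cd d) e1 e2 : e1 <= e2 -> near_pt a b e1 -> near_pt a b e2.
Proof. intros H H1 i. specialize (H1 i). lra. Qed.

Lemma near_pt_trans_le (a b c : Cd d) e1 e2 :
  (forall i, Cmod (b i - a i) <= e1) -> near_pt b c e2 -> near_pt a c (e1 + e2).
Proof.
  intros H1 H2 i. specialize (H1 i). specialize (H2 i).
  replace (c i - a i)%C with ((c i - b i) + (b i - a i))%C by ring.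
  eapply Rle_lt_trans; [apply Cmod_triangle | lra].
Qed.

Lemma near_pt_trans (a b c : Cd d) e1 e2 : near_pt a b e1 -> near_pt b c e2 -> near_pt a c (e1 + e2).
Proof. intros H1. apply near_pt_trans_le. intros i. left. apply H1. Qed.

End Near.

Lemma Cmod_RtoC_nonneg (t : R) : 0 <= t -> Cmod (RtoC t) = t.
Proof. intros. rewrite Cmod_R. apply Rabs_pos_eq; auto. Qed.

Section Balls.
Context {d : nat} (Om : Cd d -> Prop).

Definition affine_disc (c w : Cd d) (v : C) : Cd d := fun i => (c i + v * w i)%C.

Lemma affine_disc_hol (c w : Cd d) :
  (forall v, Cmod v < 1 -> Om (affine_disc c w v)) -> hol_disc Om (affine_disc c w).
Proof.
  intros H v Hv. split; auto. intros i. unfold affine_disc. apply cderivable_ex_derive.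
  apply cderivable_plus; [apply cderivable_const|].
  apply cderivable_mult; [apply cderivable_id | apply cderivable_const].
Qed.

Lemma kchain_near (c u : Cd d) (r q : R) :
  (forall y, near_pt c y r -> Om y) -> 0 < q < r -> near_pt c u q ->
  kchain Om c u (poinc (q / r)).
Proof.
  intros HO Hq Hu.
  assert (Hrq : 0 < r / q) by (apply Rdiv_lt_0_compat; lra).
  set (w := fun i => (RtoC (r / q) * (u i - c i))%C).
  assert (Hh : hol_disc Om (affine_disc c w)).
  { apply affine_disc_hol. intros v Hv. apply HO. intros i. unfold affine_disc, w.
    replace (c i + v * (RtoC (r / q) * (u i - c i)) - c i)%C
      with (v * RtoC (r / q) * (u i - c i))%C by ring.
    rewrite !Cmod_mult, Cmod_RtoC_nonneg by lra.
    specialize (Hu i). pose proof (Cmod_ge_0 v). pose proof (Cmod_ge_0 (u i - c i)).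
    assert (Cmod v * (r / q) * Cmod (u i - c i) <= 1 * (r / q) * Cmod (u i - c i))
      by (apply Rmult_le_compat_r; [lra|]; apply Rmult_le_compat_r; lra).
    assert ((r / q) * Cmod (u i - c i) < (r / q) * q) by (apply Rmult_lt_compat_l; auto).
    replace ((r / q) * q) with r in * by (field; lra). lra. }
  assert (Hz : Cmod (RtoC (q / r)) < 1).
  { rewrite Cmod_RtoC_nonneg by (apply Rlt_le, Rdiv_lt_0_compat; lra).
    apply (proj1 (Rdiv_lt_1 q r ltac:(lra))); lra. }
  pose proof (kchain_disc Om _ _ Hh Hz) as Hc.
  replace (affine_disc c w 0%C) with c in Hc
    by (apply functional_extensionality; intros i; unfold affine_disc; ring).
  rewrite poinc0_poinc, Cmod_RtoC_nonneg in Hc by (apply Rlt_le, Rdiv_lt_0_compat; lra).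
  replace (affine_disc c w (RtoC (q / r))) with u in Hc; [exact Hc|].
  apply functional_extensionality; intros i. unfold affine_disc, w.
  rewrite Cmult_assoc, <- RtoC_mult.
  replace (q / r * (r / q)) with 1 by (field; lra). ring.
Qed.

Lemma kchain_short_near (c : Cd d) (r eps : R) :
  (forall y, near_pt c y r -> Om y) -> 0 < r -> 0 < eps ->
  exists q, 0 < q /\ forall u, near_pt c u q -> exists l, kchain Om c u l /\ l <= eps.
Proof.
  intros HO Hr He. set (q := Rmin (r / 2) (eps * r / 2)).
  assert (Hq : 0 < q) by (apply Rmin_pos; [lra | apply Rmult_lt_0_compat; [apply Rmult_lt_0_compat|]; lra]).
  assert (Hq1 : q <= r / 2) by apply Rmin_l. assert (Hq2 : q <= eps * r / 2) by apply Rmin_r.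
  exists q. split; auto. intros u Hu. exists (poinc (q / r)). split.
  - apply kchain_near; auto; lra.
  - assert (Hqr : q / r <= eps / 2)
      by (apply Rmult_le_reg_r with r; [lra|]; unfold Rdiv; rewrite Rmult_assoc, Rinv_l; lra).
    assert (q / r <= 1 / 2)
      by (apply Rmult_le_reg_r with r; [lra|]; unfold Rdiv; rewrite Rmult_assoc, Rinv_l; lra).
    assert (0 <= q / r) by (apply Rlt_le, Rdiv_lt_0_compat; lra).
    pose proof (poinc_le_double (q / r)). lra.
Qed.

Lemma kchain_short_near_rev (c : Cd d) (r eps : R) :
  (forall y, near_pt c y r -> Om y) -> 0 < r -> 0 < eps ->
  exists q, 0 < q /\ forall u, near_pt c u q -> exists l, kchain Om u c l /\ l <= eps.
Proof.
  intros HO Hr He. destruct (kchain_short_near c r eps HO Hr He) as (q & Hq & H).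
  exists q. split; auto. intros u Hu. destruct (H u Hu) as (l & Hl & Hle).
  exists l. split; auto. apply kchain_rev; auto.
Qed.

(* The points joined to [a] form an open and closed subset of the domain. *)
Lemma domain_joined : is_domain Om -> forall a b, Om a -> Om b -> joined Om a b.
Proof.
  intros [Hop [Hcn _]] a b Ha Hb.
  assert (Hloc : forall y, Om y -> exists e, 0 < e /\
      forall w, near_pt y w e -> Om w /\ joined Om y w /\ joined Om w y).
  { intros y Hy. destruct (Hop y Hy) as (r & Hr & HO).
    destruct (kchain_short_near y r 1 HO Hr) as (q & Hq & Hq1); [lra|].
    destruct (kchain_short_near_rev y r 1 HO Hr) as (q' & Hq' & Hq2); [lra|].
    exists (Rmin r (Rmin q q')).
    split; [repeat apply Rmin_pos; auto|]. intros w Hw.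
    pose proof (Rmin_l r (Rmin q q')). pose proof (Rmin_r r (Rmin q q')).
    pose proof (Rmin_l q q'). pose proof (Rmin_r q q').
    split; [|split].
    - apply HO. eapply near_pt_le; [|eauto]; lra.
    - destruct (Hq1 w) as (l & Hl & _); [eapply near_pt_le; [|eauto]; lra|]. exists l; auto.
    - destruct (Hq2 w) as (l & Hl & _); [eapply near_pt_le; [|eauto]; lra|]. exists l; auto. }
  set (U := fun y => exists e, 0 < e /\ forall w, near_pt y w e -> Om w /\ joined Om a w).
  set (V := fun y => exists e, 0 < e /\ forall w, near_pt y w e -> Om w /\ ~ joined Om a w).
  assert (Hopen : forall P : Cd d -> Prop,
      is_open (fun y => exists e, 0 < e /\ forall w, near_pt y w e -> P w)).
  { intros P y (e & He & HP). exists (e / 2). split; [lra|]. intros w Hw.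
    exists (e / 2). split; [lra|]. intros w' Hw'. apply HP.
    replace e with (e / 2 + e / 2) by lra. eapply near_pt_trans; eauto. }
  assert (Hcov : forall y, Om y -> U y \/ V y).
  { intros y Hy. destruct (Hloc y Hy) as (e & He & HE).
    destruct (classic (joined Om a y)) as [Hc|Hc]; [left | right]; exists e; split; auto;
      intros w Hw; destruct (HE w Hw) as (H1 & H2 & H3); split; auto.
    - eapply joined_trans; eauto.
    - intros Hc'. apply Hc. eapply joined_trans; eauto. }
  destruct (classic (joined Om a b)) as [Hab|Hab]; auto. exfalso.
  destruct (Hcn U V (Hopen _) (Hopen _) Hcov) as (z & _ & (e1 & He1 & H1) & (e2 & He2 & H2)).
  - exists a. split; auto. destruct (Hloc a Ha) as (e & He & HE).
    exists e. split; auto. intros w Hw. destruct (HE w Hw) as (H1 & H2 & _). auto.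
  - exists b. split; auto. destruct (Hcov b Hb) as [(e & He & HE)|HV]; auto.
    exfalso. apply Hab. apply (HE b (near_pt_refl b e He)).
  - apply (proj2 (H2 z (near_pt_refl z e2 He2))), (proj2 (H1 z (near_pt_refl z e1 He1))).
Qed.

End Balls.

Section Splitting.
Context {d : nat} (Om : Cd d -> Prop).

Lemma kchain_subdisc f a zeta : hol_disc Om f -> Cmod a < 1 -> Cmod (zeta - a) < 1 - Cmod a ->
  kchain Om (f a) (f zeta) (poinc (Cmod (zeta - a) / (1 - Cmod a))).
Proof.
  intros Hf Ha Hza. set (rho := Cmod a) in *. pose proof (Cmod_ge_0 a).
  set (psi := fun v : C => (a + RtoC (1 - rho) * v)%C).
  assert (Hpsi : forall v, Cmod v < 1 -> Cmod (psi v) < 1 /\ cderivable psi v).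
  { intros v Hv. split.
    - unfold psi. eapply Rle_lt_trans; [apply Cmod_triangle|].
      rewrite Cmod_mult, Cmod_RtoC_nonneg by lra. pose proof (Cmod_ge_0 v). fold rho. nra.
    - apply cderivable_plus; [apply cderivable_const|].
      apply cderivable_mult; [apply cderivable_const | apply cderivable_id]. }
  set (eta := (RtoC (/ (1 - rho)) * (zeta - a))%C).
  assert (Heta : Cmod eta = Cmod (zeta - a) / (1 - rho)).
  { unfold eta. rewrite Cmod_mult, Cmod_RtoC_nonneg by (apply Rlt_le, Rinv_0_lt_compat; lra).
    unfold Rdiv. ring. }
  assert (Heta1 : Cmod eta < 1).
  { rewrite Heta. apply (proj1 (Rdiv_lt_1 (Cmod (zeta - a)) (1 - rho) ltac:(lra))). lra. }
  assert (Hpe : psi eta = zeta).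
  { unfold psi, eta. rewrite Cmult_assoc, <- RtoC_mult, Rinv_r by lra. ring. }
  pose proof (kchain_disc Om _ _ (hol_disc_comp Om f psi Hf Hpsi) Heta1) as Hc.
  simpl in Hc. rewrite Hpe, poinc0_poinc, Heta in Hc.
  replace (psi 0%C) with a in Hc by (unfold psi; ring). exact Hc.
Qed.

(* Go from [0] to the point [a] of modulus [tanh t] on the segment [0, zeta], then use the
   disc [D(a, 1 - |a|)], which still contains [zeta]; see [poinc_split]. *)
Lemma kchain_disc_split f zeta t :
  hol_disc Om f -> Cmod zeta < 1 -> 0 <= t <= poinc0 zeta ->
  exists u l1 l2, kchain Om (f 0%C) u l1 /\ l1 <= t /\
                  kchain Om u (f zeta) l2 /\ l2 <= poinc0 zeta - t / 2.
Proof.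
  intros Hf Hz Ht. pose proof (Cmod_ge_0 zeta) as Hr0.
  rewrite poinc0_poinc in Ht. set (r := Cmod zeta) in *.
  destruct (Req_dec r 0) as [Hr|Hr].
  { assert (Hp0 : poinc0 zeta = 0) by (rewrite poinc0_poinc; fold r; rewrite Hr; apply poinc_0).
    rewrite Hr, poinc_0 in Ht.
    exists (f 0%C), 0, (poinc0 zeta). split; [constructor|]. split; [lra|].
    split; [apply kchain_disc; auto | lra]. }
  set (E := exp (2 * t)). pose proof (exp_pos (2 * t)) as HE0. fold E in HE0.
  set (rho := (E - 1) / (E + 1)).
  assert (Hpr : poinc rho = t) by apply poinc_tanh.
  assert (Hrho0 : 0 <= rho).
  { unfold rho. apply Rmult_le_pos; [|apply Rlt_le, Rinv_0_lt_compat; lra].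
    unfold E. pose proof (exp_ineq1_le (2 * t)). lra. }
  assert (Hrho1 : rho < 1) by (apply (proj1 (Rdiv_lt_1 (E - 1) (E + 1) ltac:(lra))); lra).
  assert (Hrhor : rho <= r).
  { apply Rnot_lt_le. intros Hlt. pose proof (poinc_lt r rho ltac:(lra) Hrho1). lra. }
  set (a := (RtoC (rho / r) * zeta)%C).
  assert (Hrr : 0 <= rho / r <= 1).
  { split; [apply Rmult_le_pos; [lra | apply Rlt_le, Rinv_0_lt_compat; lra]|].
    apply Rmult_le_reg_r with r; [lra|]. unfold Rdiv. rewrite Rmult_assoc, Rinv_l; lra. }
  assert (Ha : Cmod a = rho).
  { unfold a. rewrite Cmod_mult, Cmod_RtoC_nonneg by lra. fold r. field. lra. }
  assert (Hza : Cmod (zeta - a) = r - rho).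
  { unfold a. replace (zeta - RtoC (rho / r) * zeta)%C with (RtoC (1 - rho / r) * zeta)%C
      by (rewrite RtoC_minus; ring).
    rewrite Cmod_mult, Cmod_RtoC_nonneg by lra. fold r. field. lra. }
  assert (Ha1 : Cmod a < 1) by lra.
  pose proof (kchain_disc Om f a Hf Ha1) as C1.
  pose proof (kchain_subdisc f a zeta Hf Ha1 ltac:(lra)) as C2. rewrite Hza, Ha in C2.
  exists (f a), (poinc0 a), (poinc ((r - rho) / (1 - rho))). rewrite !poinc0_poinc, Ha in *.
  split; [exact C1|]. split; [lra|]. split; [exact C2|].
  fold r. pose proof (poinc_split rho r ltac:(lra) Hz). lra.
Qed.

Lemma kchain_split z w L : kchain Om z w L -> forall t, 0 <= t <= L ->
  exists u l1 l2, kchain Om z u l1 /\ l1 <= t /\ kchain Om u w l2 /\ l2 <= L - t / 2.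
Proof.
  induction 1 as [z|f zeta w l Hf Hz Hc IH]; intros t Ht.
  - exists z, 0, 0. split; [constructor|]. split; [lra|]. split; [constructor | lra].
  - pose proof (kchain_ge0 _ _ _ _ Hc). pose proof (poinc0_ge0 zeta Hz).
    destruct (Rle_lt_dec t (poinc0 zeta)) as [Hle|Hlt].
    + destruct (kchain_disc_split f zeta t Hf Hz) as (u & l1 & l2 & C1 & L1 & C2 & L2); [lra|].
      exists u, l1, (l2 + l). split; auto. split; auto. split; [eapply kchain_cat; eauto | lra].
    + destruct (IH (t - poinc0 zeta)) as (u & l1 & l2 & C1 & L1 & C2 & L2); [lra|].
      exists u, (poinc0 zeta + l1), l2. split; [constructor; auto|]. split; [lra|]. split; auto. lra.
Qed.

End Splitting.

Fixpoint fmax (n : nat) : (Fin.t n -> R) -> R :=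
  match n with
  | O => fun _ => 0
  | S m => fun v => Rmax (v Fin.F1) (fmax m (fun i => v (Fin.FS i)))
  end.

Lemma fmax_ge n (v : Fin.t n -> R) i : v i <= fmax n v.
Proof.
  revert v. induction i as [|n i IH]; intros v; simpl; [apply Rmax_l|].
  eapply Rle_trans; [apply (IH (fun j => v (Fin.FS j))) | apply Rmax_r].
Qed.

Lemma fmax_lt n (v : Fin.t n -> R) c : 0 < c -> (forall i, v i < c) -> fmax n v < c.
Proof.
  revert v; induction n as [|n IH]; intros v Hc H; simpl; auto.
  apply Rmax_lub_lt; auto.
Qed.

Lemma fmax_attained n (v : Fin.t n -> R) c : 0 < c -> c <= fmax n v -> exists i, c <= v i.
Proof.
  revert v; induction n as [|n IH]; intros v Hc H; simpl in H; [lra|].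
  unfold Rmax in H. destruct (Rle_dec (v Fin.F1) (fmax n (fun i => v (Fin.FS i)))).
  - destruct (IH _ Hc H) as [i Hi]. eauto.
  - eauto.
Qed.

Lemma fmax_le_shift n (v w : Fin.t n -> R) e :
  0 <= e -> (forall i, v i <= w i + e) -> fmax n v <= fmax n w + e.
Proof.
  revert v w; induction n as [|n IH]; intros v w He H; simpl; [lra|].
  pose proof (H Fin.F1). pose proof (IH _ _ He (fun i => H (Fin.FS i))).
  unfold Rmax. repeat destruct Rle_dec; lra.
Qed.

Lemma fmax_Rabs_sub_le n (v w : Fin.t n -> R) e :
  0 <= e -> (forall i, Rabs (v i - w i) <= e) -> Rabs (fmax n v - fmax n w) <= e.
Proof.
  intros He H.
  assert (fmax n v <= fmax n w + e)
    by (apply fmax_le_shift; auto; intros i; specialize (H i); apply Rabs_le_between' in H; lra).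
  assert (fmax n w <= fmax n v + e)
    by (apply fmax_le_shift; auto; intros i; specialize (H i); apply Rabs_le_between' in H; lra).
  apply Rabs_le. lra.
Qed.

Lemma fin_uniform_pos n (P : Fin.t n -> R -> Prop) :
  (forall i, exists del, 0 < del /\ P i del) ->
  (forall i del del', 0 < del' <= del -> P i del -> P i del') ->
  exists del, 0 < del /\ forall i, P i del.
Proof.
  revert P; induction n as [|n IH]; intros P H Hm.
  - exists 1. split; [lra|]. intros i. exact (Fin.case0 (fun i => P i 1) i).
  - destruct (H Fin.F1) as (d1 & Hd1 & P1).
    destruct (IH (fun i => P (Fin.FS i))) as (d2 & Hd2 & P2); auto.
    { intros i del del' Hd. apply Hm; auto. }
    exists (Rmin d1 d2). split; [apply Rmin_pos; auto|].
    intros i. apply (Fin.caseS' i).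
    + apply Hm with d1; auto. split; [apply Rmin_pos; auto | apply Rmin_l].
    + intros j. apply Hm with d2; auto. split; [apply Rmin_pos; auto | apply Rmin_r].
Qed.

Lemma Rabs_Cmod_sub_le (a b : C) : Rabs (Cmod a - Cmod b) <= Cmod (a - b).
Proof.
  assert (Cmod a <= Cmod (a - b) + Cmod b).
  { replace a with ((a - b) + b)%C at 1 by ring. apply Cmod_triangle. }
  assert (Cmod b <= Cmod (a - b) + Cmod a).
  { replace b with (- (a - b) + a)%C at 1 by ring. rewrite <- (Cmod_opp (a - b)). apply Cmod_triangle. }
  unfold Rabs. destruct Rcase_abs; lra.
Qed.

Lemma continuity_pt_radial_dist {d} (f : C -> Cd d) (zeta : C) (z : Cd d) (a : R) :
  (forall i, ex_derive (fun u => f u i) (RtoC a * zeta)%C) ->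
  continuity_pt (fun t => fmax d (fun i => Cmod (f (RtoC t * zeta)%C i - z i))) a.
Proof.
  intros Hd eps He.
  destruct (fin_uniform_pos d (fun i del => forall t, Rabs (t - a) < del ->
      Cmod (f (RtoC t * zeta)%C i - f (RtoC a * zeta)%C i) < eps / 2)) as (del & Hdel & HD).
  { intros i.
    destruct (cderivable_continuous _ _ (ex_derive_cderivable _ _ (Hd i)) (eps / 2))
      as (del & Hdel & HD); [lra|].
    exists (del / (Cmod zeta + 1)). pose proof (Cmod_ge_0 zeta).
    split; [apply Rdiv_lt_0_compat; lra|]. intros t Ht. apply HD.
    replace (RtoC t * zeta - RtoC a * zeta)%C with (RtoC (t - a) * zeta)%C
      by (rewrite RtoC_minus; ring).
    rewrite Cmod_mult, Cmod_R. pose proof (Rabs_pos (t - a)).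
    apply Rlt_le_trans with (del / (Cmod zeta + 1) * (Cmod zeta + 1)); [nra|].
    right. field. lra. }
  { intros i del0 del' Hd' H t Ht. apply H. lra. }
  exists del. split; [lra|]. intros t [_ Ht]. simpl in *. unfold R_dist in *.
  assert (Hc : forall i, Rabs (Cmod (f (RtoC t * zeta)%C i - z i)
                              - Cmod (f (RtoC a * zeta)%C i - z i)) <= eps / 2).
  { intros i. eapply Rle_trans; [apply Rabs_Cmod_sub_le|].
    replace (f (RtoC t * zeta)%C i - z i - (f (RtoC a * zeta)%C i - z i))%C
      with (f (RtoC t * zeta)%C i - f (RtoC a * zeta)%C i)%C by ring.
    left. apply (HD i t Ht). }
  pose proof (fmax_Rabs_sub_le d _ _ (eps / 2) ltac:(lra) Hc). lra.
Qed.

Lemma hol_disc_exit {d} (Om : Cd d -> Prop) (f : C -> Cd d) zeta (z : Cd d) rho :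
  hol_disc Om f -> Cmod zeta < 1 -> 0 < rho -> near_pt z (f 0%C) rho ->
  (exists i, rho <= Cmod (f zeta i - z i)) ->
  exists s, 0 <= s <= 1 /\ (forall i, Cmod (f (RtoC s * zeta)%C i - z i) <= rho) /\
    (exists i, rho <= Cmod (f (RtoC s * zeta)%C i - z i)).
Proof.
  intros Hf Hz Hr H0 [j Hj].
  set (h := fun t => fmax d (fun i => Cmod (f (RtoC t * zeta)%C i - z i)) - rho).
  assert (Hcont : forall a, 0 <= a <= 1 -> continuity_pt h a).
  { intros a Ha. apply continuity_pt_minus; [|apply continuity_pt_const; intros ? ?; auto].
    apply continuity_pt_radial_dist. intros i. apply (Hf (RtoC a * zeta)%C).
    rewrite Cmod_mult, Cmod_R, Rabs_pos_eq by lra. pose proof (Cmod_ge_0 zeta). nra. }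
  assert (Hh0 : h 0 < 0).
  { unfold h; cbv beta. replace (RtoC 0 * zeta)%C with (RtoC 0) by ring.
    pose proof (fmax_lt d (fun i => Cmod (f 0%C i - z i)) rho Hr H0).
    simpl in *. lra. }
  assert (Hh1 : 0 <= h 1).
  { unfold h; cbv beta. replace (RtoC 1 * zeta)%C with zeta by ring.
    pose proof (fmax_ge d (fun i => Cmod (f zeta i - z i)) j). simpl in *. lra. }
  assert (Hs : exists s, 0 <= s <= 1 /\ h s = 0).
  { destruct Hh1 as [Hh1|Hh1]; [|exists 1; split; [lra | auto]].
    destruct (Ranalysis5.IVT_interv h 0 1) as (s & Hs1 & Hs2); eauto; lra. }
  destruct Hs as (s & Hs & Hhs). unfold h in Hhs.
  exists s. split; [exact Hs|]. split.
  - intros i. pose proof (fmax_ge d (fun i => Cmod (f (RtoC s * zeta)%C i - z i)) i). simpl in *. lra.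
  - apply (fmax_attained d (fun i => Cmod (f (RtoC s * zeta)%C i - z i)) rho Hr). lra.
Qed.

Lemma kchain_exit {d} (Om : Cd d -> Prop) (z : Cd d) rho : 0 < rho ->
  forall p u l, kchain Om p u l -> near_pt z p rho -> (exists i, rho <= Cmod (u i - z i)) ->
  exists c l', kchain Om p c l' /\ l' <= l /\ (forall i, Cmod (c i - z i) <= rho) /\
    (exists i, rho <= Cmod (c i - z i)).
Proof.
  intros Hr p u l H. induction H as [p|f zeta w l Hf Hz Hc IH]; intros Hp Hu.
  - exfalso. destruct Hu as [i Hi]. specialize (Hp i). lra.
  - pose proof (kchain_ge0 _ _ _ _ Hc).
    destruct (classic (exists i, rho <= Cmod (f zeta i - z i))) as [Hout|Hin].
    + destruct (hol_disc_exit Om f zeta z rho Hf Hz Hr Hp Hout) as (s & Hs & Hc1 & Hc2).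
      assert (Hsz : Cmod (RtoC s * zeta)%C <= Cmod zeta).
      { rewrite Cmod_mult, Cmod_R, Rabs_pos_eq by lra. pose proof (Cmod_ge_0 zeta). nra. }
      exists (f (RtoC s * zeta)%C), (poinc0 (RtoC s * zeta)%C).
      split; [apply kchain_disc; auto; lra|]. split; [|auto].
      rewrite !poinc0_poinc. pose proof (Cmod_ge_0 (RtoC s * zeta)%C).
      pose proof (poinc_le _ _ (conj H0 Hsz) Hz). rewrite <- poinc0_poinc in *. lra.
    + assert (Hw : near_pt z (f zeta) rho).
      { intros i. apply Rnot_le_lt. intros Hi. apply Hin. eauto. }
      destruct (IH Hw Hu) as (c & l' & C1 & L1 & Hc1 & Hc2).
      exists c, (poinc0 zeta + l'). split; [constructor; auto|]. split; [lra | auto].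
Qed.

Lemma exists_inv_succ_lt eps : 0 < eps -> exists N : nat, / (INR N + 1) < eps.
Proof.
  intros He. destruct (INR_archimed eps 1 He) as [n Hn]. exists n.
  pose proof (pos_INR n). apply Rmult_lt_reg_r with (INR n + 1); [lra|].
  rewrite Rinv_l by lra. nra.
Qed.

Lemma inv_succ_le (n N : nat) : (N <= n)%nat -> / (INR n + 1) <= / (INR N + 1).
Proof.
  intros H. apply Rinv_le_contravar; [pose proof (pos_INR N); lra|]. apply le_INR in H. lra.
Qed.

Lemma inv_succ_pos (n : nat) : 0 < / (INR n + 1).
Proof. apply Rinv_0_lt_compat. pose proof (pos_INR n). lra. Qed.

Lemma strict_incr_ge (phi : nat -> nat) : (forall n, (phi n < phi (S n))%nat) ->
  forall n, (n <= phi n)%nat.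
Proof. intros H n. induction n as [|n IH]; [lia|]. specialize (H n). lia. Qed.

Lemma strict_incr_le (phi : nat -> nat) : (forall n, (phi n < phi (S n))%nat) ->
  forall m n, (m <= n)%nat -> (phi m <= phi n)%nat.
Proof. intros H m n Hmn. induction Hmn as [|n _ IH]; [lia|]. specialize (H n). lia. Qed.

Lemma R_bounded_subseq (a : nat -> R) M : (forall n, Rabs (a n) <= M) ->
  exists phi l, (forall n, (phi n < phi (S n))%nat) /\
    forall eps, 0 < eps -> exists N, forall n, (N <= n)%nat -> Rabs (a (phi n) - l) < eps.
Proof.
  intros HM.
  destruct (Bolzano_Weierstrass a (fun c => -M <= c <= M) (compact_P3 (-M) M)) as [l Hl].
  { intros n. specialize (HM n). apply Rabs_le_between in HM. lra. }
  assert (H : forall kN : nat * nat,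
      exists p, (snd kN <= p)%nat /\ Rabs (a p - l) < / (INR (fst kN) + 1)).
  { intros [k N]. simpl. pose proof (inv_succ_pos k) as Hp.
    destruct (Hl (disc l (mkposreal _ Hp))) with N as (p & Hp1 & Hp2).
    - exists (mkposreal _ Hp). intros y Hy. exact Hy.
    - exists p. split; auto. }
  destruct (choice _ H) as [g Hg].
  (* [phi (S k)] is an index beyond [phi k] at which [a] is [1/(k+2)]-close to [l]. *)
  set (phi := fix phi n := match n with O => g (O, O) | S k => g (S k, S (phi k)) end).
  exists phi, l. split.
  - intros n. simpl. destruct (Hg (S n, S (phi n))) as [H1 _]. simpl in H1. lia.
  - intros eps He. destruct (exists_inv_succ_lt eps He) as [N HN]. exists N. intros n Hn.
    assert (Rabs (a (phi n) - l) < / (INR n + 1)).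
    { destruct n; simpl; [exact (proj2 (Hg (O, O))) | exact (proj2 (Hg (S n, S (phi n))))]. }
    pose proof (inv_succ_le n N Hn). lra.
Qed.

Lemma Cmod_le_Rabs_sum (z : C) : Cmod z <= Rabs (fst z) + Rabs (snd z).
Proof.
  unfold Cmod. pose proof (Rabs_pos (fst z)). pose proof (Rabs_pos (snd z)).
  rewrite <- (pow2_abs (fst z)), <- (pow2_abs (snd z)).
  rewrite <- (sqrt_square (Rabs (fst z) + Rabs (snd z))) by lra.
  apply sqrt_le_1_alt. nra.
Qed.

Definition subseq_lim {d} (u : nat -> Cd d) (phi : nat -> nat) (c : Cd d) :=
  (forall n, (phi n < phi (S n))%nat) /\
  forall eps, 0 < eps -> exists N, forall n, (N <= n)%nat -> near_pt c (u (phi n)) eps.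

Lemma Cd_bounded_subseq d (u : nat -> Cd d) M :
  (forall n i, Cmod (u n i) <= M) -> exists phi c, subseq_lim u phi c.
Proof.
  revert u. induction d as [|d IH]; intros u HM.
  - exists (fun n => n), (fun i => Fin.case0 (fun _ => C) i). split; [intros; lia|].
    intros eps He. exists O. intros n _ i.
    exact (Fin.case0 (fun i => Cmod (u n i - Fin.case0 (fun _ => C) i) < eps) i).
  - destruct (R_bounded_subseq (fun n => fst (u n Fin.F1)) M) as (phi1 & al & Hp1 & Hc1).
    { intros n. eapply Rle_trans; [apply re_le_Cmod | apply HM]. }
    destruct (R_bounded_subseq (fun n => snd (u (phi1 n) Fin.F1)) M) as (phi2 & be & Hp2 & Hc2).
    { intros n. eapply Rle_trans; [|apply (HM (phi1 n) Fin.F1)].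
      eapply Rle_trans; [apply Rmax_r | apply Rmax_Cmod]. }
    destruct (IH (fun n i => u (phi1 (phi2 n)) (Fin.FS i))) as (phi3 & c' & Hp3 & Hc3).
    { intros n i. apply HM. }
    exists (fun n => phi1 (phi2 (phi3 n))), (fun i => Fin.caseS' i (fun _ => C) (al, be) c').
    split.
    + intros n. pose proof (Hp3 n). pose proof (Hp2 (phi3 n)). pose proof (Hp1 (phi2 (phi3 n))).
      pose proof (strict_incr_le phi2 Hp2 (S (phi3 n)) (phi3 (S n)) ltac:(lia)).
      pose proof (strict_incr_le phi1 Hp1 (S (phi2 (phi3 n))) (phi2 (phi3 (S n))) ltac:(lia)).
      lia.
    + intros eps He.
      destruct (Hc1 (eps / 2)) as [N1 HN1]; [lra|]. destruct (Hc2 (eps / 2)) as [N2 HN2]; [lra|].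
      destruct (Hc3 eps He) as [N3 HN3]. exists (N1 + N2 + N3)%nat. intros n Hn i.
      pose proof (strict_incr_ge phi2 Hp2 (phi3 n)). pose proof (strict_incr_ge phi3 Hp3 n).
      apply (Fin.caseS' i); [|intros j; simpl; apply HN3; lia].
      simpl. eapply Rle_lt_trans; [apply Cmod_le_Rabs_sum|].
      assert (Rabs (fst (u (phi1 (phi2 (phi3 n))) Fin.F1) - al) < eps / 2) by (apply HN1; lia).
      assert (Rabs (snd (u (phi1 (phi2 (phi3 n))) Fin.F1) - be) < eps / 2) by (apply HN2; lia).
      destruct (u (phi1 (phi2 (phi3 n))) Fin.F1). unfold Rminus in *. simpl in *. lra.
Qed.

Definition cluster_point {d} (u : nat -> Cd d) (c : Cd d) :=
  forall eps, 0 < eps -> forall N, exists n, (N <= n)%nat /\ near_pt c (u n) eps.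

Lemma bounded_cluster_point {d} (u : nat -> Cd d) M :
  (forall n i, Cmod (u n i) <= M) -> exists c, cluster_point u c.
Proof.
  intros HM. destruct (Cd_bounded_subseq d u M HM) as (phi & c & Hp & Hc). exists c.
  intros eps He N. destruct (Hc eps He) as [N0 HN0]. exists (phi (N + N0)%nat). split.
  - pose proof (strict_incr_ge phi Hp (N + N0)). lia.
  - apply HN0. lia.
Qed.

Lemma cluster_point_near {d} (u : nat -> Cd d) (z : Cd d) r :
  (forall n i, Cmod (u n i - z i) <= r) ->
  exists c, cluster_point u c /\ forall i, Cmod (c i - z i) <= r.
Proof.
  intros Hu. destruct (bounded_cluster_point u (fmax d (fun j => Cmod (z j)) + r)) as [c Hc].
  { intros n i. pose proof (fmax_ge d (fun j => Cmod (z j)) i). specialize (Hu n i). simpl in *.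
    replace (u n i) with ((u n i - z i) + z i)%C by ring.
    eapply Rle_trans; [apply Cmod_triangle | lra]. }
  exists c. split; auto. intros i. apply Rle_plus_epsilon. intros eps He.
  destruct (Hc eps He O) as (n & _ & Hn). specialize (Hn i). specialize (Hu n i).
  replace (c i - z i)%C with (- (u n i - c i) + (u n i - z i))%C by ring.
  eapply Rle_trans; [apply Cmod_triangle|]. rewrite Cmod_opp. lra.
Qed.

(* Hyperbolicity, through compactness of the sphere, bounds below the length of chains leaving
   a ball. *)
Lemma kchain_exit_length {d} (Om : Cd d -> Prop) : kob_hyperbolic Om ->
  forall z rho, Om z -> 0 < rho -> (forall w, near_pt z w (2 * rho) -> Om w) ->
  exists m, 0 < m /\
    forall u l, kchain Om z u l -> (exists i, rho <= Cmod (u i - z i)) -> m <= l.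
Proof.
  intros Hhyp z rho Hz Hr HB. apply NNPP. intros Hn.
  assert (Hs : forall n : nat, exists c, (forall i, Cmod (c i - z i) <= rho) /\
      (exists i, rho <= Cmod (c i - z i)) /\ exists l, kchain Om z c l /\ l < / (INR n + 1)).
  { intros n. apply NNPP. intros Hn2. apply Hn. exists (/ (INR n + 1)).
    split; [apply inv_succ_pos|]. intros u l Hc Hu. apply Rnot_lt_le. intros Hlt.
    destruct (kchain_exit Om z rho Hr z u l Hc (near_pt_refl z rho Hr) Hu)
      as (c & l' & C1 & L1 & Hc1 & Hc2).
    apply Hn2. exists c. split; auto. split; auto. exists l'. split; auto. lra. }
  destruct (choice _ Hs) as [c Hc].
  destruct (cluster_point_near c z rho) as (cs & Hcs & Hcs1); [intros n; apply (Hc n)|].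
  assert (HBcs : forall y, near_pt cs y rho -> Om y).
  { intros y Hy. apply HB. replace (2 * rho) with (rho + rho) by ring.
    apply (near_pt_trans_le z cs y); auto. }
  assert (Hk0 : kob_dist Om z cs <= 0).
  { apply Rle_plus_epsilon. intros eps He.
    destruct (kchain_short_near_rev Om cs rho (eps / 2) HBcs Hr) as (q & Hq & Hshort); [lra|].
    destruct (exists_inv_succ_lt (eps / 2)) as [N HN]; [lra|].
    destruct (Hcs q Hq N) as (n & Hn1 & Hn2).
    destruct (Hc n) as (_ & _ & l1 & C1 & L1). destruct (Hshort (c n) Hn2) as (l2 & C2 & L2).
    pose proof (kob_dist_le Om _ _ _ (kchain_cat Om _ _ _ _ _ C1 C2)).
    pose proof (inv_succ_le n N Hn1). lra. }
  assert (z = cs) as <-.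
  { apply NNPP. intros Hne.
    pose proof (Hhyp z cs Hz (HBcs cs (near_pt_refl cs rho Hr)) Hne). lra. }
  destruct (Hcs rho Hr O) as (n & _ & Hn2). destruct (Hc n) as (_ & [i Hi] & _).
  specialize (Hn2 i). lra.
Qed.

Section Depth.
Context {d : nat} (Om : Cd d -> Prop) (o x : Cd d).

Definition has_depth (s : R) (z : Cd d) :=
  Om z /\ forall eps eta, 0 < eps -> 0 < eta -> exists w, Om w /\ near_pt x w eps /\
    kob_dist Om z w - kob_dist Om o w <= - s + eta.

Lemma has_depth_base : boundary Om x -> Om o -> has_depth 0 o.
Proof.
  intros [Hc _] Ho. split; auto. intros eps eta He Hn. destruct (Hc eps He) as (a & Ha & Hxa).
  exists a. split; auto. split; auto. lra.
Qed.

Lemma has_depth_horoball s z Rr : has_depth s z -> - (/ 2 * ln Rr) < s -> horoball Om o x Rr z.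
Proof.
  intros [Hz Hg] Hs. split; auto. unfold liminf_at.
  set (eta := (s + / 2 * ln Rr) / 2).
  apply Rbar_le_lt_trans with (Finite (- s + eta)); [|simpl; unfold eta; lra].
  apply Lub_Rbar_correct. intros r (eps & He & Hr).
  destruct (Hg eps eta He) as (w & Hw & Hwx & Hwg); [unfold eta; lra|].
  specialize (Hr w Hw Hwx). simpl. lra.
Qed.

Lemma has_depth_le_kob_dist s z : is_domain Om -> Om o -> has_depth s z -> s - 1 <= kob_dist Om o z.
Proof.
  intros Hdom Ho [Hz Hg]. destruct (Hg 1 1) as (w & Hw & _ & Hwg); try lra.
  pose proof (kob_dist_triangle Om o z w (domain_joined Om Hdom _ _ Ho Hz)
    (domain_joined Om Hdom _ _ Hz Hw)). lra.
Qed.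

(* Split an almost minimal chain from [z] to a point [w] near [x] after length [t]; the
   splitting point stays in the ball around [z] because [t] is less than the exit length. *)
Lemma has_depth_split s z rho m t : is_domain Om -> ~ Om x -> has_depth s z -> 0 < rho ->
  (forall w, near_pt z w (2 * rho) -> Om w) ->
  (forall u l, kchain Om z u l -> (exists i, rho <= Cmod (u i - z i)) -> m <= l) -> 0 < t < m ->
  forall eps, 0 < eps -> exists w u, Om w /\ near_pt x w eps /\
    kob_dist Om z w - kob_dist Om o w <= - s + eps /\ near_pt z u rho /\
    (exists l1, kchain Om z u l1 /\ l1 <= t) /\
    (exists l2, kchain Om u w l2 /\ l2 <= kob_dist Om z w + eps - t / 2).
Proof.
  intros Hdom Hx [Hz Hg] Hr HB Hm Ht eps He.
  destruct (Hg (Rmin rho eps) eps) as (w & Hw & Hwx & Hwg); auto; [apply Rmin_pos; auto|].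
  assert (Hwo : exists i, rho <= Cmod (w i - z i)).
  { destruct (classic (exists i, 2 * rho <= Cmod (x i - z i))) as [[i Hi]|Hxin].
    - exists i. specialize (Hwx i). pose proof (Rmin_l rho eps).
      assert (Cmod (x i - z i) <= Cmod (w i - z i) + Cmod (w i - x i)).
      { replace (x i - z i)%C with ((w i - z i) + - (w i - x i))%C by ring.
        eapply Rle_trans; [apply Cmod_triangle|]. rewrite Cmod_opp. lra. }
      lra.
    - exfalso. apply Hx, HB. intros i. apply Rnot_le_lt. intros Hi. apply Hxin. eauto. }
  destruct (kob_dist_approx Om z w (domain_joined Om Hdom z w Hz Hw) eps He) as (L & CL & LL).
  pose proof (Hm w L CL Hwo).
  destruct (kchain_split Om z w L CL t) as (u & l1 & l2 & C1 & L1 & C2 & L2); [lra|].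
  exists w, u. split; [auto|]. split; [eapply near_pt_le; [apply Rmin_r | eauto]|].
  split; [lra|]. split.
  - intros i. apply Rnot_le_lt. intros Hi. assert (m <= l1) by (apply (Hm u l1 C1); eauto). lra.
  - split; [exists l1; auto | exists l2; split; auto; lra].
Qed.

Lemma has_depth_step : is_domain Om -> kob_hyperbolic Om -> boundary Om x -> Om o ->
  forall s z, has_depth s z -> exists del, 0 < del /\ forall t, 0 < t <= del ->
    exists z', has_depth (s + t / 2) z' /\ kob_dist Om z z' <= t.
Proof.
  intros Hdom Hhyp [_ Hx] Ho s z Hsz. pose proof (proj1 Hsz) as Hz.
  destruct (proj1 Hdom z Hz) as (e & He & HE).
  set (rho := e / 2). assert (Hr : 0 < rho) by (unfold rho; lra).
  assert (HB : forall w, near_pt z w (2 * rho) -> Om w)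
    by (unfold rho; replace (2 * (e / 2)) with e by field; auto).
  destruct (kchain_exit_length Om Hhyp z rho Hz Hr HB) as (m & Hm & Hexit).
  exists (m / 2). split; [lra|]. intros t Ht.
  destruct (choice _ (fun n => has_depth_split s z rho m t Hdom Hx Hsz Hr HB Hexit
    ltac:(lra) (/ (INR n + 1)) (inv_succ_pos n))) as [w Hw].
  destruct (choice _ Hw) as [u Hu].
  destruct (cluster_point_near u z rho) as (us & Hus & Hus1).
  { intros n i. left. apply (Hu n). }
  assert (HBus : forall y, near_pt us y rho -> Om y).
  { intros y Hy. apply HB. replace (2 * rho) with (rho + rho) by ring.
    apply (near_pt_trans_le z us y); auto. }
  exists us. split; [split|].
  - apply HBus, near_pt_refl; auto.
  - intros eps eta Heps Heta.
    destruct (kchain_short_near Om us rho (eta / 2) HBus Hr) as (q & Hq & Hshort); [lra|].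
    destruct (exists_inv_succ_lt (Rmin eps (eta / 4))) as [N HN]; [apply Rmin_pos; lra|].
    pose proof (Rmin_l eps (eta / 4)). pose proof (Rmin_r eps (eta / 4)).
    destruct (Hus q Hq N) as (n & Hn1 & Hn2). pose proof (inv_succ_le n N Hn1).
    destruct (Hu n) as (Hwn & Hwx & Hwg & _ & _ & (l2 & C2 & L2)).
    destruct (Hshort (u n) Hn2) as (l3 & C3 & L3).
    exists (w n). split; [auto|]. split; [eapply near_pt_le; [|eauto]; lra|].
    pose proof (kob_dist_le Om _ _ _ (kchain_cat Om _ _ _ _ _ C3 C2)). lra.
  - apply Rle_plus_epsilon. intros eps Heps.
    destruct (kchain_short_near_rev Om us rho eps HBus Hr) as (q & Hq & Hshort); auto.
    destruct (Hus q Hq O) as (n & _ & Hn2).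
    destruct (Hu n) as (_ & _ & _ & _ & (l1 & C1 & L1) & _).
    destruct (Hshort (u n) Hn2) as (l3 & C3 & L3).
    pose proof (kob_dist_le Om _ _ _ (kchain_cat Om _ _ _ _ _ C1 C3)). lra.
Qed.

End Depth.

Lemma exists_half_sup (E : R -> Prop) : E 0 -> (forall b, E b -> b <= 1) ->
  exists b, E b /\ forall b', E b' -> b' <= 2 * b.
Proof.
  intros H0 H1. destruct (completeness E) as [A [HA1 HA2]]; [exists 1; auto | eauto|].
  destruct (Rle_dec A 0) as [Hle|Hgt].
  - exists 0. split; auto. intros b' Hb'. specialize (HA1 b' Hb'). lra.
  - assert (~ is_upper_bound E (A / 2)) by (intros Hu; specialize (HA2 _ Hu); lra).
    apply not_all_ex_not in H. destruct H as [b Hb]. apply imply_to_and in Hb.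
    exists b. split; [tauto|]. intros b' Hb'. specialize (HA1 b' Hb'). lra.
Qed.

Section Unbounded.
Context {d : nat} (Om : Cd d -> Prop) (o x : Cd d).

(* A step that realises at least half of the best depth gain available within [1]. *)
Lemma has_depth_greedy_step s z : has_depth Om o x s z ->
  exists s' z', has_depth Om o x s' z' /\ s <= s' /\ kob_dist Om z z' <= 2 * (s' - s) /\
    forall b z'', 0 <= b <= 1 -> has_depth Om o x (s + b) z'' -> kob_dist Om z z'' <= 2 * b ->
      b <= 2 * (s' - s).
Proof.
  intros Hz.
  destruct (exists_half_sup (fun b => 0 <= b <= 1 /\ exists z'', has_depth Om o x (s + b) z'' /\
      kob_dist Om z z'' <= 2 * b)) as (b & (Hb & z' & Hz' & Hd) & Hmax).
  - split; [lra|]. exists z. rewrite Rplus_0_r, kob_dist_refl. split; auto; lra.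
  - intros b' [Hb' _]. lra.
  - exists (s + b), z'. replace (s + b - s) with b by ring.
    split; auto. split; [lra|]. split; auto. intros b' z'' Hb' Hz'' Hd'. apply Hmax; eauto.
Qed.

Lemma has_depth_limit (z : nat -> Cd d) (s : nat -> R) T :
  is_domain Om -> kob_complete Om -> (forall n, has_depth Om o x (s n) (z n)) ->
  (forall m n, (m <= n)%nat -> s m <= s n /\ kob_dist Om (z m) (z n) <= 2 * (s n - s m)) ->
  (forall n, s n < T) ->
  exists sl zi, has_depth Om o x sl zi /\ (forall n, s n <= sl) /\
    (forall eps, 0 < eps -> exists N, sl - s N < eps) /\
    (forall n, kob_dist Om (z n) zi <= 2 * (sl - s n)).
Proof.
  intros Hdom Hcomp Hz Hmono HT.
  assert (HOm : forall n, Om (z n)) by (intros n; apply (Hz n)).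
  assert (Hj : forall a b, Om a -> Om b -> joined Om a b) by (apply domain_joined; auto).
  destruct (completeness (fun r => exists n, r = s n)) as [sl [HS1 HS2]].
  { exists T. intros r [n ->]. left; auto. }
  { exists (s O). eauto. }
  assert (HsS : forall n, s n <= sl) by (intros n; apply HS1; eauto).
  assert (Hconv : forall eps, 0 < eps -> exists N, forall n, (N <= n)%nat -> sl - s n < eps).
  { intros eps He. apply NNPP. intros Hn.
    assert (is_upper_bound (fun r => exists n, r = s n) (sl - eps)); [|specialize (HS2 _ H); lra].
    intros r [n ->]. apply Rnot_lt_le. intros Hlt. apply Hn. exists n. intros n' Hn'.
    pose proof (proj1 (Hmono n n' Hn')). lra. }
  destruct (Hcomp z HOm) as (zi & Hzi & Hlim).
  { intros eps He. destruct (Hconv (eps / 4)) as [N HN]; [lra|]. exists N. intros m n Hm Hn.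
    destruct (Compare_dec.le_lt_dec m n) as [Hmn|Hmn].
    - pose proof (proj2 (Hmono m n Hmn)). pose proof (HN m Hm). pose proof (HsS n). lra.
    - rewrite kob_dist_sym. pose proof (proj2 (Hmono n m ltac:(lia))).
      pose proof (HN n Hn). pose proof (HsS m). lra. }
  assert (Hdist : forall m, kob_dist Om (z m) zi <= 2 * (sl - s m)).
  { intros m. apply Rle_plus_epsilon. intros eps He. destruct (Hlim eps He) as [N HN].
    pose proof (HN (m + N)%nat ltac:(lia)). pose proof (proj2 (Hmono m (m + N)%nat ltac:(lia))).
    pose proof (kob_dist_triangle Om (z m) (z (m + N)%nat) zi (Hj _ _ (HOm _) (HOm _))
      (Hj _ _ (HOm _) Hzi)).
    pose proof (HsS (m + N)%nat). lra. }
  exists sl, zi. split; [split; auto|]; [|split; [auto|split; [|auto]]].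
  - intros eps eta He Heta. destruct (Hconv (eta / 6)) as [N HN]; [lra|].
    destruct (proj2 (Hz N) eps (eta / 3)) as (w & Hw & Hwx & Hwg); auto; [lra|].
    exists w. split; auto. split; auto.
    pose proof (kob_dist_triangle Om zi (z N) w (Hj _ _ Hzi (HOm N)) (Hj _ _ (HOm N) Hw)).
    rewrite (kob_dist_sym Om zi (z N)) in H. pose proof (Hdist N). pose proof (HN N (le_n N)). lra.
  - intros eps He. destruct (Hconv eps He) as [N HN]. exists N. apply HN. lia.
Qed.

Lemma has_depth_greedy_sequence : is_domain Om -> boundary Om x -> Om o ->
  exists (s : nat -> R) (z : nat -> Cd d), (forall n, has_depth Om o x (s n) (z n)) /\
    (forall m n, (m <= n)%nat -> s m <= s n /\ kob_dist Om (z m) (z n) <= 2 * (s n - s m)) /\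
    (forall n b z', 0 <= b <= 1 -> has_depth Om o x (s n + b) z' -> kob_dist Om (z n) z' <= 2 * b ->
      b <= 2 * (s (S n) - s n)).
Proof.
  intros Hdom Hx Ho.
  assert (Hst : forall p : R * Cd d, exists p' : R * Cd d, has_depth Om o x (fst p) (snd p) ->
     has_depth Om o x (fst p') (snd p') /\ fst p <= fst p' /\
     kob_dist Om (snd p) (snd p') <= 2 * (fst p' - fst p) /\
     forall b z', 0 <= b <= 1 -> has_depth Om o x (fst p + b) z' ->
       kob_dist Om (snd p) z' <= 2 * b -> b <= 2 * (fst p' - fst p)).
  { intros [s z]. simpl. destruct (classic (has_depth Om o x s z)) as [Hg|Hg].
    - destruct (has_depth_greedy_step s z Hg) as (s' & z' & H). exists (s', z'). auto.
    - exists (s, z). intros H. contradiction. }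
  destruct (choice _ Hst) as [F HF].
  set (X := fix X n := match n with O => (0, o) | S k => F (X k) end).
  set (s := fun n => fst (X n)). set (z := fun n => snd (X n)).
  assert (Hgood : forall n, has_depth Om o x (s n) (z n)).
  { induction n as [|n IH]; [apply has_depth_base; auto | apply (HF (X n) IH)]. }
  exists s, z. split; [exact Hgood | split].
  - intros m n Hmn. induction Hmn as [|n _ IH]; [rewrite kob_dist_refl; lra|].
    destruct (HF (X n) (Hgood n)) as (_ & H1 & H2 & _).
    pose proof (kob_dist_triangle Om (z m) (z n) (z (S n))
      (domain_joined Om Hdom _ _ (proj1 (Hgood m)) (proj1 (Hgood n)))
      (domain_joined Om Hdom _ _ (proj1 (Hgood n)) (proj1 (Hgood (S n))))).
    change (fst (F (X n))) with (s (S n)) in *. change (snd (F (X n))) with (z (S n)) in *.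
    fold (s n) (z n) in H1, H2. lra.
  - intros n. exact (proj2 (proj2 (proj2 (HF (X n) (Hgood n))))).
Qed.

Lemma has_depth_unbounded : complete_kob_hyperbolic Om -> boundary Om x -> Om o ->
  forall T, exists s z, T <= s /\ has_depth Om o x s z.
Proof.
  intros [Hdom [Hhyp Hcomp]] Hx Ho T. apply NNPP. intros Hn.
  assert (Hb : forall s z, has_depth Om o x s z -> s < T)
    by (intros s z Hg; apply Rnot_le_lt; intros Hs; apply Hn; eauto).
  destruct (has_depth_greedy_sequence Hdom Hx Ho) as (s & z & Hgood & Hmono & Hgreedy).
  destruct (has_depth_limit z s T Hdom Hcomp Hgood Hmono (fun n => Hb _ _ (Hgood n)))
    as (sl & zi & Hgi & HsS & Hconv & Hdist).
  destruct (has_depth_step Om o x Hdom Hhyp Hx Ho sl zi Hgi) as (del & Hdel & Hloc).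
  set (t := Rmin del 1).
  assert (Ht : 0 < t <= del) by (split; [apply Rmin_pos; lra | apply Rmin_l]).
  assert (Ht1 : t <= 1) by apply Rmin_r.
  destruct (Hloc t Ht) as (z2 & Hz2 & Hz2d).
  destruct (Hconv (Rmin (1 / 2) (t / 8))) as [N HN]; [apply Rmin_pos; lra|].
  pose proof (Rmin_l (1 / 2) (t / 8)). pose proof (Rmin_r (1 / 2) (t / 8)).
  pose proof (HsS N). pose proof (HsS (S N)).
  assert (sl - s N + t / 2 <= 2 * (s (S N) - s N)); [|lra].
  apply (Hgreedy N _ z2); [lra | replace (s N + (sl - s N + t / 2)) with (sl + t / 2) by ring; auto|].
  pose proof (kob_dist_triangle Om (z N) zi z2
    (domain_joined Om Hdom _ _ (proj1 (Hgood N)) (proj1 Hgi))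
    (domain_joined Om Hdom _ _ (proj1 Hgi) (proj1 Hz2))).
  pose proof (Hdist N). lra.
Qed.

End Unbounded.

Lemma escaping_cluster_point_boundary {d} (Om : Cd d -> Prop) (o : Cd d) (z : nat -> Cd d) :
  is_domain Om -> is_bounded Om -> Om o -> (forall n, Om (z n)) ->
  (forall n, INR n - 1 <= kob_dist Om o (z n)) ->
  exists y, cluster_point z y /\ boundary Om y.
Proof.
  intros Hdom [M HM] Ho Hz Hesc.
  destruct (bounded_cluster_point z M) as [y Hy]; [intros n i; apply HM; auto|].
  exists y. split; auto. split.
  - intros eps He. destruct (Hy eps He O) as (n & _ & Hn). exists (z n). split; auto.
  - intros Hyo. destruct (proj1 Hdom y Hyo) as (e & He & HE).
    destruct (kchain_short_near Om y e (1 / 2) HE He) as (q & Hq & Hshort); [lra|].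
    destruct (INR_archimed 1 (kob_dist Om o y + 2)) as [N HN]; [lra|].
    destruct (Hy q Hq N) as (n & Hn & Hyn). destruct (Hshort (z n) Hyn) as (l & Cl & Ll).
    pose proof (kob_dist_triangle Om o y (z n) (domain_joined Om Hdom _ _ Ho Hyo) (ex_intro _ l Cl)).
    pose proof (kob_dist_le Om _ _ _ Cl). pose proof (Hesc n). apply le_INR in Hn. lra.
Qed.

Theorem lemma3p2 (d : nat) (Om : Cd d -> Prop) :
  complete_kob_hyperbolic Om ->
  forall (o x : Cd d) (Rr : R), Om o -> boundary Om x -> 0 < Rr ->
    (exists z, horoball Om o x Rr z) /\
    (is_bounded Om ->
       exists y, closure (horoball Om o x Rr) y /\ boundary Om y).
Proof.
  intros Hc o x Rr Ho Hx HR. set (s0 := - (/ 2 * ln Rr) + 1).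
  assert (Hdeep : forall n : nat, exists z s, Rmax s0 (INR n) <= s /\ has_depth Om o x s z).
  { intros n. destruct (has_depth_unbounded Om o x Hc Hx Ho (Rmax s0 (INR n))) as (s & z & H).
    eauto. }
  destruct (choice _ Hdeep) as [z Hz].
  assert (Hzh : forall n, horoball Om o x Rr (z n)).
  { intros n. destruct (Hz n) as (s & Hs & Hzs). apply (has_depth_horoball Om o x s); auto.
    pose proof (Rmax_l s0 (INR n)). unfold s0 in *. lra. }
  split; [exists (z O); auto|]. intros Hbd.
  destruct (escaping_cluster_point_boundary Om o z (proj1 Hc) Hbd Ho) as (y & Hy & Hyb).
  - intros n. apply (Hzh n).
  - intros n. destruct (Hz n) as (s & Hs & Hzs).
    pose proof (has_depth_le_kob_dist Om o x s (z n) (proj1 Hc) Ho Hzs).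
    pose proof (Rmax_r s0 (INR n)). lra.
  - exists y. split; auto. intros eps He. destruct (Hy eps He O) as (n & _ & Hn). eauto.
Qed.
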